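(* Let $E$ be a Fréchet space, let $E^*$ be its topological dual (the space of continuous linear functionals $E\to\mathbb{R}$) endowed with the weak$^*$ topology, let $[a,b]\subset\mathbb{R}$ be a compact interval and let $f:[a,b]\to E^*$ be continuous. Then the closed convex hull $\overline{\mathrm{co}}(f([a,b]))$ is compact in $E^*$.
   Context: The closed convex hull $\overline{\mathrm{co}}(K)$ of a subset $K$ of a topological vector space is the closure of the set of all finite convex combinations of elements of $K$. *)

From Stdlib Require Import Reals Lra List.
Open Scope R_scope.

Record RVectorSpace := {
  vcar :> Type;
  vadd : vcar -> vcar -> vcar;
  vscal : R -> vcar -> vcar;
  vzero : vcar;
  vopp : vcar -> vcar;
  vadd_assoc : forall x y z, vadd x (vadd y z) = vadd (vadd x y) z;
  vadd_comm : forall x y, vadd x y = vadd y x;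
  vadd_0 : forall x, vadd x vzero = x;
  vadd_opp : forall x, vadd x (vopp x) = vzero;
  vscal_1 : forall x, vscal 1 x = x;
  vscal_assoc : forall a b x, vscal a (vscal b x) = vscal (a * b) x;
  vscal_distr_r : forall a x y, vscal a (vadd x y) = vadd (vscal a x) (vscal a y);
  vscal_distr_l : forall a b x, vscal (a + b) x = vadd (vscal a x) (vscal b x)
}.

Definition vsub {E : RVectorSpace} (x y : E) : E := vadd E x (vopp E y).

Record Frechet := {
  fvs :> RVectorSpace;
  snorm : nat -> fvs -> R;
  snorm_nonneg : forall n x, 0 <= snorm n x;
  snorm_triangle : forall n x y, snorm n (vadd fvs x y) <= snorm n x + snorm n y;
  snorm_homog : forall n c x, snorm n (vscal fvs c x) = Rabs c * snorm n x;
  snorm_sep : forall x, (forall n, snorm n x = 0) -> x = vzero fvs;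
  frechet_complete : forall u : nat -> fvs,
    (forall n eps, eps > 0 -> exists N, forall i j, (i >= N)%nat -> (j >= N)%nat ->
        snorm n (vsub (u i) (u j)) < eps) ->
    exists l : fvs, forall n eps, eps > 0 -> exists N, forall i, (i >= N)%nat ->
        snorm n (vsub (u i) l) < eps
}.

Definition is_linear {E : RVectorSpace} (phi : E -> R) : Prop :=
  (forall x y, phi (vadd E x y) = phi x + phi y) /\
  (forall c x, phi (vscal E c x) = c * phi x).

(** Continuity for the locally convex topology generated by the seminorms:
    basic neighbourhoods of x are finite intersections of seminorm balls,
    i.e. sets {y | forall k <= n, snorm k (y - x) < delta}. *)
Definition is_continuous_functional {E : Frechet} (phi : E -> R) : Prop :=
  forall (x : E) eps, eps > 0 -> exists (n : nat) (delta : R), delta > 0 /\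
    forall y : E, (forall k, (k <= n)%nat -> snorm E k (vsub y x) < delta) ->
      Rabs (phi y - phi x) < eps.

Definition in_dual {E : Frechet} (phi : E -> R) : Prop :=
  is_linear phi /\ is_continuous_functional phi.

(** Weak-* open sets: U is open iff around each of its points phi it contains a
    basic neighbourhood {psi | forall x in xs, |psi x - phi x| < eps}.
    (Open sets of E^* are the traces on E^* of these sets.) *)
Definition wopen {E : Frechet} (U : (E -> R) -> Prop) : Prop :=
  forall phi, U phi -> exists (xs : list E) (eps : R), eps > 0 /\
    forall psi, (forall x, In x xs -> Rabs (psi x - phi x) < eps) -> U psi.

Definition wstar_compact {E : Frechet} (K : (E -> R) -> Prop) : Prop :=
  (forall phi, K phi -> in_dual phi) /\
  forall (I : Type) (U : I -> (E -> R) -> Prop),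
    (forall i, wopen (U i)) ->
    (forall phi, K phi -> exists i, U i phi) ->
    exists l : list I, forall phi, K phi -> exists i, In i l /\ U i phi.

Definition comb {E : Frechet} (l : list (R * (E -> R))) : E -> R :=
  fun x => fold_right (fun p acc => fst p * snd p x + acc) 0 l.

Definition convex_hull {E : Frechet} (K : (E -> R) -> Prop) : (E -> R) -> Prop :=
  fun phi => exists l : list (R * (E -> R)),
    (forall p, In p l -> 0 <= fst p /\ K (snd p)) /\
    fold_right (fun p acc => fst p + acc) 0 l = 1 /\
    phi = comb l.

Definition wstar_closure {E : Frechet} (A : (E -> R) -> Prop) : (E -> R) -> Prop :=
  fun phi => in_dual phi /\
    forall U, wopen U -> U phi -> exists psi, A psi /\ U psi.

Definition closed_convex_hull {E : Frechet} (K : (E -> R) -> Prop) :=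
  wstar_closure (convex_hull K).

Definition wstar_continuous_on (E : Frechet) (a b : R) (f : R -> E -> R) : Prop :=
  (forall t, a <= t <= b -> in_dual (f t)) /\
  forall t, a <= t <= b -> forall U : (E -> R) -> Prop, wopen U -> U (f t) ->
    exists delta, delta > 0 /\
      forall s, a <= s <= b -> Rabs (s - t) < delta -> U (f s).

Definition image_interval {E : Frechet} (f : R -> E -> R) (a b : R) : (E -> R) -> Prop :=
  fun phi => exists t, a <= t <= b /\ phi = f t.

(** The family [f([a,b])] is pointwise bounded, since each [t |-> f t x] is continuous
    on a compact interval.  By the uniform boundedness principle (a Baire argument in the
    complete space [E]) it is then equicontinuous: all [f t] are bounded by one constant [C]
    on one seminorm ball.  Such a bound passes to convex combinations and to weak-* limits,
    so every element of the closed convex hull is a continuous functional bounded by [C] on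
    that ball.  Hence the hull is pointwise bounded and closed in [R^E], and Tychonoff's
    theorem makes it compact. *)

From Pilot Require Import Defs.
From Stdlib Require Import Reals List Lra Lia Classical ClassicalEpsilon.
Open Scope R_scope.

Lemma vadd_0_l (E : RVectorSpace) (x : E) : vadd E (vzero E) x = x.
Proof. rewrite vadd_comm; apply vadd_0. Qed.

Lemma vscal_0 (E : RVectorSpace) (x : E) : vscal E 0 x = vzero E.
Proof.
  assert (Hdouble : vadd E (vscal E 0 x) (vscal E 0 x) = vscal E 0 x).
  { rewrite <- vscal_distr_l. f_equal. ring. }
  transitivity (vadd E (vscal E 0 x) (vadd E (vscal E 0 x) (vopp E (vscal E 0 x)))).
  - rewrite vadd_opp, vadd_0. reflexivity.
  - rewrite vadd_assoc, Hdouble. apply vadd_opp.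
Qed.

Lemma vopp_scal (E : RVectorSpace) (x : E) : vopp E x = vscal E (-1) x.
Proof.
  assert (Hsum : vadd E x (vscal E (-1) x) = vzero E).
  { rewrite <- (vscal_1 E x) at 1. rewrite <- vscal_distr_l, Rplus_opp_r. apply vscal_0. }
  rewrite <- (vadd_0 E (vopp E x)), <- Hsum, vadd_assoc, (vadd_comm E (vopp E x) x),
    vadd_opp, vadd_0_l. reflexivity.
Qed.

Lemma vsub_0_r (E : RVectorSpace) (x : E) : vsub x (vzero E) = x.
Proof. unfold vsub. rewrite vopp_scal, <- (vscal_0 E (vzero E)), vscal_assoc, Rmult_0_r, vscal_0. apply vadd_0. Qed.

Lemma vsub_addl (E : RVectorSpace) (x z : E) : vsub (vadd E x z) x = z.
Proof. unfold vsub. rewrite (vadd_comm E x z), <- vadd_assoc, vadd_opp, vadd_0. reflexivity. Qed.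

Lemma vsub_diag (E : RVectorSpace) (x : E) : vsub x x = vzero E.
Proof. apply vadd_opp. Qed.

Lemma vsub_chain (E : RVectorSpace) (x y z : E) :
  vsub z x = vadd E (vsub z y) (vsub y x).
Proof.
  unfold vsub. rewrite <- vadd_assoc, (vadd_assoc E (vopp E y)), (vadd_comm E (vopp E y) y),
    vadd_opp, vadd_0_l. reflexivity.
Qed.

Lemma vsub_swap (E : RVectorSpace) (x y : E) : vsub x y = vscal E (-1) (vsub y x).
Proof.
  unfold vsub. rewrite vscal_distr_r, !vopp_scal, vscal_assoc.
  replace (-1 * -1) with 1 by ring. rewrite vscal_1, vadd_comm. reflexivity.
Qed.

Section Seminorms.
Variable E : Frechet.

Lemma snorm_zero n : snorm E n (vzero E) = 0.
Proof. rewrite <- (vscal_0 E (vzero E)), snorm_homog, Rabs_R0. ring. Qed.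

Lemma snorm_sub_sym n (x y : E) : snorm E n (vsub x y) = snorm E n (vsub y x).
Proof.
  rewrite vsub_swap, snorm_homog, Rabs_left by lra. ring.
Qed.

Lemma snorm_sub_triangle n (x y z : E) :
  snorm E n (vsub z x) <= snorm E n (vsub z y) + snorm E n (vsub y x).
Proof. rewrite (vsub_chain E x y z). apply snorm_triangle. Qed.

Lemma snorm_bounded_upto n (x : E) : exists M, forall k, (k <= n)%nat -> snorm E k x <= M.
Proof.
  induction n as [|n [M HM]].
  - exists (snorm E 0 x). intros k Hk. replace k with 0%nat by lia. lra.
  - exists (Rmax M (snorm E (S n) x)). intros k Hk.
    destruct (Nat.eq_dec k (S n)) as [->|Hne]; [apply Rmax_r|].
    eapply Rle_trans; [apply HM; lia | apply Rmax_l].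
Qed.

Definition sball (x : E) (n : nat) (d : R) (y : E) : Prop :=
  forall k, (k <= n)%nat -> snorm E k (vsub y x) < d.

Definition cball (x : E) (n : nat) (d : R) (y : E) : Prop :=
  forall k, (k <= n)%nat -> snorm E k (vsub y x) <= d.

Lemma sball_center x n d : d > 0 -> sball x n d x.
Proof. intros Hd k _. rewrite vsub_diag, snorm_zero. exact Hd. Qed.

Lemma sball_translate x n d z : sball (vzero E) n d z -> sball x n d (vadd E x z).
Proof. intros Hz k Hk. rewrite vsub_addl, <- (vsub_0_r E z). apply Hz, Hk. Qed.

Lemma sball_absorbing n d (x : E) : d > 0 ->
  exists lam, lam > 0 /\ sball (vzero E) n d (vscal E lam x).
Proof.
  intro Hd. destruct (snorm_bounded_upto n x) as [M HM].
  assert (HM0 : 0 <= M) by (eapply Rle_trans; [apply (snorm_nonneg E 0 x) | apply HM; lia]).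
  exists (d / (2 * (M + 1))). split; [apply Rdiv_lt_0_compat; lra|].
  intros k Hk. rewrite vsub_0_r, snorm_homog, Rabs_pos_eq by (apply Rlt_le, Rdiv_lt_0_compat; lra).
  apply Rle_lt_trans with (d / (2 * (M + 1)) * M).
  - apply Rmult_le_compat_l; [apply Rlt_le, Rdiv_lt_0_compat; lra | apply HM, Hk].
  - apply Rmult_lt_reg_r with (2 * (M + 1)); [lra|].
    replace (d / (2 * (M + 1)) * M * (2 * (M + 1))) with (d * M) by (field; lra).
    nra.
Qed.

End Seminorms.

Lemma linear_zero (E : RVectorSpace) (phi : E -> R) : is_linear phi -> phi (vzero E) = 0.
Proof. intros [_ Hs]. rewrite <- (vscal_0 E (vzero E)), Hs. ring. Qed.

Lemma linear_sub (E : RVectorSpace) (phi : E -> R) x y : is_linear phi ->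
  phi (vsub y x) = phi y - phi x.
Proof. intros [Ha Hs]. unfold vsub. rewrite Ha, vopp_scal, Hs. ring. Qed.

Section WeakStar.
Variable E : Frechet.

Lemma wopen_eval_ball (x : E) (c eps : R) :
  wopen (fun psi : E -> R => Rabs (psi x - c) < eps).
Proof.
  intros psi0 H0. exists (x :: nil), (eps - Rabs (psi0 x - c)). split; [lra|].
  intros psi Hpsi. specialize (Hpsi x (in_eq _ _)).
  replace (psi x - c) with ((psi x - psi0 x) + (psi0 x - c)) by ring.
  eapply Rle_lt_trans; [apply Rabs_triang | lra].
Qed.

(** One shape for the failure sets of a bound at a point, of additivity and of homogeneity. *)
Lemma wopen_eval3_gt (u v w : E) (c1 c2 r : R) :
  wopen (fun psi : E -> R => r < Rabs (psi u + c1 * psi v + c2 * psi w)).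
Proof.
  intros psi0 H0.
  set (g := fun psi : E -> R => psi u + c1 * psi v + c2 * psi w).
  set (K := 1 + Rabs c1 + Rabs c2).
  assert (HK : K > 0) by (unfold K; pose proof (Rabs_pos c1); pose proof (Rabs_pos c2); lra).
  exists (u :: v :: w :: nil), ((Rabs (g psi0) - r) / K).
  split; [apply Rdiv_lt_0_compat; unfold g; lra|].
  intros psi Hpsi.
  assert (Hu := Hpsi u ltac:(simpl; auto)).
  assert (Hv := Hpsi v ltac:(simpl; auto)).
  assert (Hw := Hpsi w ltac:(simpl; auto)).
  set (eps := (Rabs (g psi0) - r) / K) in *.
  assert (Hdiff : Rabs (g psi0 - g psi) < K * eps).
  { replace (g psi0 - g psi) with
      ((psi0 u - psi u) + (c1 * (psi0 v - psi v) + c2 * (psi0 w - psi w))) by (unfold g; ring).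
    rewrite Rabs_minus_sym in Hu, Hv, Hw.
    eapply Rle_lt_trans; [apply Rabs_triang|].
    eapply Rle_lt_trans; [apply Rplus_le_compat_l, Rabs_triang|].
    rewrite !Rabs_mult. unfold K.
    pose proof (Rmult_le_compat_l _ _ _ (Rabs_pos c1) (Rlt_le _ _ Hv)).
    pose proof (Rmult_le_compat_l _ _ _ (Rabs_pos c2) (Rlt_le _ _ Hw)).
    nra. }
  assert (HKe : K * eps = Rabs (g psi0) - r) by (unfold eps; field; lra).
  pose proof (Rabs_triang_inv (g psi0) (g psi0 - g psi)).
  replace (g psi0 - (g psi0 - g psi)) with (g psi) in * by ring.
  change (r < Rabs (g psi)). lra.
Qed.

Definition wadherent (S : (E -> R) -> Prop) (phi : E -> R) : Prop :=
  forall U, wopen U -> U phi -> exists psi, S psi /\ U psi.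

Lemma wadherent_notin (S V : (E -> R) -> Prop) phi :
  wopen V -> (forall psi, S psi -> ~ V psi) -> wadherent S phi -> ~ V phi.
Proof. intros HV HS Hphi HVphi. destruct (Hphi V HV HVphi) as [psi [Spsi Vpsi]]. exact (HS psi Spsi Vpsi). Qed.

Lemma wadherent_abs_le (S : (E -> R) -> Prop) (z : E) C phi :
  (forall psi, S psi -> Rabs (psi z) <= C) -> wadherent S phi -> Rabs (phi z) <= C.
Proof.
  intros HS Hphi. apply Rnot_lt_le.
  set (V := fun psi : E -> R => C < Rabs (psi z + 0 * psi z + 0 * psi z)).
  assert (HV : forall psi : E -> R, V psi <-> C < Rabs (psi z))
    by (intro psi; unfold V; replace (psi z + 0 * psi z + 0 * psi z) with (psi z) by ring; tauto).
  intro Hgt. apply (wadherent_notin S V phi (wopen_eval3_gt _ _ _ _ _ _)); [|exact Hphi|apply HV, Hgt].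
  intros psi Spsi Vpsi. apply HV in Vpsi. specialize (HS psi Spsi). lra.
Qed.

Lemma wadherent_linear (S : (E -> R) -> Prop) phi :
  (forall psi, S psi -> is_linear psi) -> wadherent S phi -> is_linear phi.
Proof.
  intros HS Hphi.
  assert (Hrel : forall u v w c1 c2,
    (forall psi, S psi -> psi u + c1 * psi v + c2 * psi w = 0) -> phi u + c1 * phi v + c2 * phi w = 0).
  { intros u v w c1 c2 Hzero. apply NNPP. intro Hne.
    apply (wadherent_notin S _ phi (wopen_eval3_gt u v w c1 c2 0) ) ; [|exact Hphi|now apply Rabs_pos_lt].
    intros psi Spsi. rewrite (Hzero psi Spsi), Rabs_R0. lra. }
  split.
  - intros x y. assert (H := Hrel (vadd E x y) x y (-1) (-1)).
    enough (phi (vadd E x y) + -1 * phi x + -1 * phi y = 0) by lra.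
    apply H. intros psi Spsi. destruct (HS psi Spsi) as [Ha _]. rewrite Ha. ring.
  - intros c x. assert (H := Hrel (vscal E c x) x x (- c) 0).
    enough (phi (vscal E c x) + - c * phi x + 0 * phi x = 0) by lra.
    apply H. intros psi Spsi. destruct (HS psi Spsi) as [_ Hs]. rewrite Hs. ring.
Qed.

Lemma wadherent_trans (S T : (E -> R) -> Prop) phi :
  (forall psi, T psi -> wadherent S psi) -> wadherent T phi -> wadherent S phi.
Proof.
  intros HT Hphi U HU HUphi. destruct (Hphi U HU HUphi) as [psi [Tpsi HUpsi]].
  exact (HT psi Tpsi U HU HUpsi).
Qed.

End WeakStar.

Lemma dependent_choice_seq (A : Type) (Q : nat -> A -> A -> Prop) (a0 : A) :
  (forall j s, exists s', Q j s s') ->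
  exists u : nat -> A, u 0%nat = a0 /\ forall j, Q j (u j) (u (S j)).
Proof.
  intro HQ. destruct (choice (fun js s' => Q (fst js) (snd js) s') (fun js => HQ (fst js) (snd js)))
    as [F HF].
  exists (fix u j := match j with O => a0 | S j => F (j, u j) end).
  split; [reflexivity|]. intro j. exact (HF (j, _)).
Qed.

Section Baire.
Variable E : Frechet.

Lemma cball_of_sball (x y : E) n d : sball E x n d y -> cball E x n d y.
Proof. intros H k Hk. apply Rlt_le, H, Hk. Qed.

Lemma cball_limit (u : nat -> E) (l x : E) n d :
  (forall k eps, eps > 0 -> exists N, forall i, (i >= N)%nat -> snorm E k (vsub (u i) l) < eps) ->
  (forall i, cball E x n d (u i)) -> cball E x n d l.
Proof.
  intros Hl Hu k Hk. apply Rle_plus_epsilon. intros eps He.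
  destruct (Hl k eps He) as [N HN].
  pose proof (snorm_sub_triangle E k x (u N) l) as Htri.
  rewrite (snorm_sub_sym E k l (u N)) in Htri.
  pose proof (HN N (le_n N)). pose proof (Hu N k Hk). lra.
Qed.

Lemma nested_cballs_meet (X : nat -> E) (N : nat -> nat) (D : nat -> R) :
  (forall j, (j <= N j)%nat) -> (forall j, 0 <= D j <= (/ 2) ^ j) ->
  (forall j z, cball E (X (S j)) (N (S j)) (D (S j)) z -> cball E (X j) (N j) (D j) z) ->
  exists l, forall j, cball E (X j) (N j) (D j) l.
Proof.
  intros HN HD Hnest.
  assert (Hnested : forall J i z, (J <= i)%nat ->
            cball E (X i) (N i) (D i) z -> cball E (X J) (N J) (D J) z).
  { intros J i z Hi. induction Hi; auto. }
  assert (Hcenter : forall J i, (J <= i)%nat -> cball E (X J) (N J) (D J) (X i)).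
  { intros J i Hi. apply (Hnested J i _ Hi). intros k _.
    rewrite vsub_diag, snorm_zero. apply HD. }
  assert (Hcauchy : forall k eps, eps > 0 -> exists M, forall i i', (i >= M)%nat -> (i' >= M)%nat ->
            snorm E k (vsub (X i) (X i')) < eps).
  { intros k eps He.
    destruct (pow_lt_1_zero (/ 2) ltac:(rewrite Rabs_right; lra) (eps / 2) ltac:(lra)) as [J HJ].
    set (J' := Nat.max J k). exists J'. intros i i' Hi Hi'.
    assert (Hk : (k <= N J')%nat) by (specialize (HN J'); unfold J' in *; lia).
    pose proof (Hcenter _ i Hi k Hk). pose proof (Hcenter _ i' Hi' k Hk).
    pose proof (snorm_sub_triangle E k (X i') (X J') (X i)) as Htri.
    rewrite (snorm_sub_sym E k (X J') (X i')) in Htri.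
    pose proof (HJ J' ltac:(unfold J'; lia)) as Hsmall.
    rewrite Rabs_right in Hsmall by (apply Rle_ge, pow_le; lra).
    pose proof (HD J'). lra. }
  destruct (frechet_complete E X Hcauchy) as [l Hl].
  exists l. intro J.
  apply (cball_limit (fun i => X (J + i)%nat)); [|intro i; apply Hcenter; lia].
  intros k eps He. destruct (Hl k eps He) as [M HM]. exists M. intros i Hi. apply HM. lia.
Qed.

Variable P : nat -> E -> Prop.
Hypothesis P_closed : forall m y, ~ P m y -> exists n d, d > 0 /\ forall z, sball E y n d z -> ~ P m z.
Hypothesis P_cover : forall x, exists m, P m x.

Lemma baire_step :
  (forall m x n d, d > 0 -> exists y, sball E x n d y /\ ~ P m y) ->
  forall j x n d, d > 0 -> exists x' n' d', 0 < d' <= d / 2 /\ (n < n')%nat /\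
    (forall z, cball E x' n' d' z -> sball E x n d z) /\ (forall z, cball E x' n' d' z -> ~ P j z).
Proof.
  intros Hdense j x n d Hd.
  destruct (Hdense j x n (d / 2)) as [y [Hy HnP]]; [lra|].
  destruct (P_closed j y HnP) as [n'' [d'' [Hd'' Hz]]].
  exists y, (n'' + S n)%nat, (Rmin (d'' / 2) (d / 4)).
  pose proof (Rmin_l (d'' / 2) (d / 4)). pose proof (Rmin_r (d'' / 2) (d / 4)).
  assert (0 < Rmin (d'' / 2) (d / 4)) by (apply Rmin_glb_lt; lra).
  split; [lra|]. split; [lia|]. split.
  - intros z Hzb k Hk. pose proof (Hzb k ltac:(lia)). pose proof (Hy k Hk).
    pose proof (snorm_sub_triangle E k x y z). lra.
  - intros z Hzb. apply Hz. intros k Hk. pose proof (Hzb k ltac:(lia)). lra.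
Qed.

Theorem frechet_baire : exists m x n d, d > 0 /\ forall y, sball E x n d y -> P m y.
Proof.
  apply NNPP; intro Hneg.
  assert (Hdense : forall m x n d, d > 0 -> exists y, sball E x n d y /\ ~ P m y).
  { intros m x n d Hd. apply NNPP; intro H1. apply Hneg. exists m, x, n, d. split; [exact Hd|].
    intros y Hy. apply NNPP; intro Hp. apply H1. exists y. split; assumption. }
  (* The guard [d > 0] makes each [Q j] total; the [j]-th ball avoids [P j], so the point
     common to all the balls lies in no [P m]. *)
  set (Q := fun j (s s' : E * nat * R) =>
     let '(x, n, d) := s in let '(x', n', d') := s' in
     d > 0 -> 0 < d' <= d / 2 /\ (n < n')%nat /\
       (forall z, cball E x' n' d' z -> cball E x n d z) /\ (forall z, cball E x' n' d' z -> ~ P j z)).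
  destruct (dependent_choice_seq _ Q (vzero E, 0%nat, 1)) as [u [Hu0 Hu]].
  { intros j [[x n] d]. destruct (Rlt_dec 0 d) as [Hd|Hd].
    - destruct (baire_step Hdense j x n d Hd) as [x' [n' [d' [Hd' [Hn' [Hsub HnP]]]]]].
      exists (x', n', d'). intros _. repeat split; auto; try lra.
      intros z Hz. apply cball_of_sball, Hsub, Hz.
    - exists (x, n, d). intro; lra. }
  set (X := fun j => fst (fst (u j))). set (N := fun j => snd (fst (u j))). set (D := fun j => snd (u j)).
  assert (Hstep : forall j, D j > 0 -> 0 < D (S j) <= D j / 2 /\ (N j < N (S j))%nat /\
       (forall z, cball E (X (S j)) (N (S j)) (D (S j)) z -> cball E (X j) (N j) (D j) z) /\
       (forall z, cball E (X (S j)) (N (S j)) (D (S j)) z -> ~ P j z)).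
  { intro j. specialize (Hu j). unfold X, N, D.
    destruct (u j) as [[x n] d], (u (S j)) as [[x' n'] d']. exact Hu. }
  assert (HD : forall j, 0 < D j <= (/ 2) ^ j /\ (j <= N j)%nat).
  { induction j as [|j IH].
    - unfold D, N. rewrite Hu0. simpl. split; [lra|lia].
    - destruct (Hstep j ltac:(lra)) as [Hd [Hn _]]. simpl. split; [lra|lia]. }
  destruct (nested_cballs_meet X N D) as [l Hl].
  - apply HD.
  - intro j. destruct (HD j) as [Hd _]. lra.
  - intro j. apply Hstep, HD.
  - destruct (P_cover l) as [m Hm].
    apply (proj2 (proj2 (proj2 (Hstep m ltac:(apply HD)))) l (Hl (S m)) Hm).
Qed.

End Baire.

Section Equicontinuity.
Variable E : Frechet.

Definition ball_bounded (n : nat) (d C : R) (phi : E -> R) : Prop :=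
  forall z, sball E (vzero E) n d z -> Rabs (phi z) <= C.

Theorem uniform_boundedness (S : (E -> R) -> Prop) :
  (forall phi, S phi -> in_dual phi) ->
  (forall x, exists M, forall phi, S phi -> Rabs (phi x) <= M) ->
  exists n d C, d > 0 /\ forall phi, S phi -> ball_bounded n d C phi.
Proof.
  intros Hdual Hpt.
  set (P := fun (m : nat) (y : E) => forall phi, S phi -> Rabs (phi y) <= INR m).
  destruct (frechet_baire E P) as [m [x0 [n [d [Hd Hball]]]]].
  - intros m y HnP.
    destruct (not_all_ex_not _ _ HnP) as [phi Hphi].
    destruct (imply_to_and _ _ Hphi) as [Sphi Hgt]. apply Rnot_le_lt in Hgt.
    destruct (proj2 (Hdual phi Sphi) y (Rabs (phi y) - INR m)) as [n [d [Hd Hcont]]]; [lra|].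
    exists n, d. split; [exact Hd|]. intros z Hz HPz.
    pose proof (Hcont z Hz) as Hclose. pose proof (HPz phi Sphi).
    pose proof (Rabs_triang_inv (phi y) (phi y - phi z)) as Htri.
    rewrite Rabs_minus_sym in Hclose.
    replace (phi y - (phi y - phi z)) with (phi z) in Htri by ring. lra.
  - intro x. destruct (Hpt x) as [M HM].
    destruct (INR_archimed 1 M ltac:(lra)) as [m Hm].
    exists m. intros phi Sphi. pose proof (HM phi Sphi). lra.
  - exists n, d, (2 * INR m). split; [exact Hd|]. intros phi Sphi z Hz.
    pose proof (Hball (vadd E x0 z) (sball_translate E x0 n d z Hz) phi Sphi) as Hshift.
    pose proof (Hball x0 (sball_center E x0 n d Hd) phi Sphi).
    destruct (proj1 (Hdual phi Sphi)) as [Hadd _]. rewrite Hadd in Hshift.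
    pose proof (Rabs_triang (phi x0 + phi z) (- phi x0)) as Htri.
    rewrite Rabs_Ropp in Htri. replace (phi x0 + phi z + - phi x0) with (phi z) in Htri by ring. lra.
Qed.

Lemma ball_bounded_nonneg n d C phi : is_linear phi -> d > 0 -> ball_bounded n d C phi -> 0 <= C.
Proof.
  intros Hl Hd Hb. specialize (Hb (vzero E) (sball_center E _ n d Hd)).
  rewrite (linear_zero E phi Hl), Rabs_R0 in Hb. exact Hb.
Qed.

Lemma ball_bounded_continuous n d C phi :
  is_linear phi -> d > 0 -> ball_bounded n d C phi -> is_continuous_functional phi.
Proof.
  intros Hl Hd Hb x eps He.
  pose proof (ball_bounded_nonneg n d C phi Hl Hd Hb) as HC.
  set (c := 2 * (C + 1) / eps).
  assert (Hc : c > 0) by (unfold c; apply Rdiv_lt_0_compat; lra).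
  exists n, (d / c). split; [apply Rdiv_lt_0_compat; lra|].
  intros y Hy.
  assert (Hz : Rabs (phi (vscal E c (vsub y x))) <= C).
  { apply Hb. intros k Hk. rewrite vsub_0_r, snorm_homog, Rabs_pos_eq by lra.
    pose proof (Rmult_lt_compat_l c _ _ Hc (Hy k Hk)) as Hscaled.
    replace (c * (d / c)) with d in Hscaled by (field; lra). exact Hscaled. }
  rewrite (proj2 Hl), (linear_sub E phi x y Hl), Rabs_mult, (Rabs_pos_eq c) in Hz by lra.
  assert (Hce : eps * c = 2 * (C + 1)) by (unfold c; field; lra).
  apply Rnot_le_lt; intro Hge.
  pose proof (Rmult_le_compat_r c _ _ (Rlt_le _ _ Hc) Hge). lra.
Qed.

Lemma ball_bounded_pointwise n d C (x : E) : d > 0 ->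
  exists M, forall phi, is_linear phi -> ball_bounded n d C phi -> Rabs (phi x) <= M.
Proof.
  intro Hd. destruct (sball_absorbing E n d x Hd) as [lam [Hlam Hx]].
  exists (C / lam). intros phi Hl Hb.
  specialize (Hb _ Hx). rewrite (proj2 Hl), Rabs_mult, Rabs_pos_eq in Hb by lra.
  apply Rmult_le_reg_l with lam; [exact Hlam|].
  replace (lam * (C / lam)) with C by (field; lra). exact Hb.
Qed.

End Equicontinuity.

Section ConvexHull.
Variable E : Frechet.

Lemma comb_linear (l : list (R * (E -> R))) :
  (forall p, In p l -> is_linear (snd p)) -> is_linear (comb l).
Proof.
  induction l as [|p l IH]; intro Hl.
  - split; intros; unfold comb; simpl; ring.
  - destruct (Hl p (in_eq _ _)) as [Ha Hs].
    destruct IH as [IHa IHs]; [intros q Hq; apply Hl; right; exact Hq|].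
    split; intros; unfold comb in *; simpl; [rewrite Ha, IHa | rewrite Hs, IHs]; ring.
Qed.

Lemma comb_abs_le (l : list (R * (E -> R))) z C :
  (forall p, In p l -> 0 <= fst p /\ Rabs (snd p z) <= C) ->
  Rabs (comb l z) <= C * fold_right (fun p acc => fst p + acc) 0 l.
Proof.
  induction l as [|p l IH]; intro Hl.
  - unfold comb; simpl. rewrite Rabs_R0. lra.
  - destruct (Hl p (in_eq _ _)) as [Hp HpC].
    specialize (IH (fun q Hq => Hl q (or_intror Hq))).
    change (comb (p :: l) z) with (fst p * snd p z + comb l z). simpl.
    eapply Rle_trans; [apply Rabs_triang|].
    rewrite Rabs_mult, (Rabs_pos_eq (fst p) Hp).
    pose proof (Rmult_le_compat_l _ _ _ Hp HpC). lra.
Qed.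

Lemma convex_hull_linear (S : (E -> R) -> Prop) phi :
  (forall psi, S psi -> is_linear psi) -> convex_hull S phi -> is_linear phi.
Proof.
  intros HS [l [Hl [_ ->]]]. apply comb_linear. intros p Hp. apply HS, Hl, Hp.
Qed.

Lemma convex_hull_ball_bounded (S : (E -> R) -> Prop) n d C phi :
  (forall psi, S psi -> ball_bounded E n d C psi) -> convex_hull S phi -> ball_bounded E n d C phi.
Proof.
  intros HS [l [Hl [Hsum ->]]] z Hz.
  rewrite <- (Rmult_1_r C), <- Hsum. apply comb_abs_le.
  intros p Hp. destruct (Hl p Hp) as [Hp0 Sp]. split; [exact Hp0|]. apply HS; assumption.
Qed.

Lemma wadherent_convex_hull_equicontinuous (S : (E -> R) -> Prop) n d C phi : d > 0 ->
  (forall psi, S psi -> is_linear psi /\ ball_bounded E n d C psi) ->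
  wadherent E (convex_hull S) phi -> in_dual phi /\ ball_bounded E n d C phi.
Proof.
  intros Hd HS Hphi.
  assert (Hlin : is_linear phi).
  { apply (wadherent_linear E (convex_hull S) phi); [|exact Hphi].
    intros psi. apply convex_hull_linear. apply HS. }
  assert (Hb : ball_bounded E n d C phi).
  { intros z Hz. apply (wadherent_abs_le E (convex_hull S)); [|exact Hphi].
    intros psi Hpsi. apply (convex_hull_ball_bounded S n d C); [apply HS|exact Hpsi|exact Hz]. }
  split; [split; [exact Hlin | exact (ball_bounded_continuous E n d C phi Hlin Hd Hb)] | exact Hb].
Qed.

End ConvexHull.

Definition clamp (a b s : R) := Rmax a (Rmin b s).

Lemma clamp_in a b s : a <= b -> a <= clamp a b s <= b.
Proof. intro H. unfold clamp, Rmax, Rmin. repeat destruct (Rle_dec _ _); lra. Qed.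

Lemma clamp_id a b s : a <= s <= b -> clamp a b s = s.
Proof. intro H. unfold clamp, Rmax, Rmin. repeat destruct (Rle_dec _ _); lra. Qed.

Lemma clamp_lipschitz a b s t : a <= b -> Rabs (clamp a b s - clamp a b t) <= Rabs (s - t).
Proof.
  intro H. unfold clamp, Rmax, Rmin. repeat destruct (Rle_dec _ _);
  unfold Rabs; repeat destruct (Rcase_abs _); lra.
Qed.

Lemma wstar_continuous_eval_bounded (E : Frechet) a b f : a <= b -> wstar_continuous_on E a b f ->
  forall x, exists M, forall t, a <= t <= b -> Rabs (f t x) <= M.
Proof.
  intros Hab [_ Hcont] x.
  (* [g] is continuous on all of [R], which is what [continuity_ab_maj] asks for at [a] and [b]. *)
  set (g := fun s => f (clamp a b s) x).
  assert (Hg : forall c, a <= c <= b -> continuity_pt g c).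
  { intros c _ eps He. set (tc := clamp a b c).
    destruct (Hcont tc (clamp_in a b c Hab) _ (wopen_eval_ball E x (f tc x) eps)) as [delta [Hdelta Hs]].
    { rewrite Rminus_diag, Rabs_R0. exact He. }
    exists delta. split; [exact Hdelta|]. intros s [_ Hs2]. unfold R_dist in *. unfold g.
    apply Hs; [apply clamp_in, Hab|]. eapply Rle_lt_trans; [apply clamp_lipschitz, Hab | exact Hs2]. }
  destruct (continuity_ab_maj g a b Hab Hg) as [tmax [Hmax _]].
  destruct (continuity_ab_min g a b Hab Hg) as [tmin [Hmin _]].
  exists (Rmax (g tmax) (- g tmin)). intros t Ht.
  specialize (Hmax t Ht). specialize (Hmin t Ht).
  unfold g in *. rewrite (clamp_id a b t Ht) in Hmax, Hmin.
  unfold Rabs, Rmax. destruct (Rcase_abs _), (Rle_dec _ _); lra.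
Qed.

From HB Require Import structures.
From mathcomp Require Import all_boot all_order all_algebra finmap.
From mathcomp Require Import all_classical all_reals all_analysis.
From mathcomp Require Import Rstruct Rstruct_topology.
Local Open Scope classical_set_scope.

Local Notation pointwise E := (prod_topology (fun _ : {classic E} => R)).

(** [compact_cover] below is stated for pointed spaces. *)
HB.instance Definition _ (E : Type) := isPointed.Build (pointwise E) (fun _ => 0%R).

Lemma nbhs_eval_near (E : Frechet) (phi : pointwise E) (xs : list E) (eps : R) : (0 < eps)%R ->
  nbhs phi [set psi : pointwise E | forall x, In x xs -> Rabs (psi x - phi x) < eps].
Proof.
move=> eps_gt0; elim: xs => [|x xs IH].
  by apply: filterS (@filterT _ _ (@nbhs_filter (pointwise E) phi)) => psi _ x [].
have near_x : nbhs (phi x) [set r : R | Rabs (r - phi x) < eps].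
  apply/nbhs_ballP; exists eps => //= r; rewrite /ball /= => /RltP.
  by rewrite -Rabs_Ropp Ropp_minus_distr.
apply: filterS (filterI IH (@proj_continuous {classic E} (fun _ => R) x phi _ near_x)).
by move=> psi [Hxs Hx] y [<-|?]; [exact: Hx | exact: Hxs].
Qed.

Lemma wopen_open (E : Frechet) (V : (E -> R) -> Prop) : Defs.wopen V -> open (V : set (pointwise E)).
Proof.
move=> HV; rewrite openE => phi /HV [xs [eps [eps_gt0 Hxs]]].
by apply: filterS (@nbhs_eval_near E phi xs eps _) => //; apply/RltP.
Qed.

(** By Tychonoff, [K] is a closed subset of the compact box [prod_x [-c x, c x]]. *)
Lemma pointwise_bounded_wclosed_compact (E : Frechet) (K : (E -> R) -> Prop) :
  (forall x, exists M, forall phi, K phi -> Rabs (phi x) <= M) ->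
  (forall phi, wadherent E K phi -> K phi) ->
  forall (I : Type) (U : I -> (E -> R) -> Prop), (forall i, Defs.wopen (U i)) ->
    (forall phi, K phi -> exists i, U i phi) ->
    exists l : list I, forall phi, K phi -> exists i, In i l /\ U i phi.
Proof.
move=> /boolp.choice [c Kbounded] Kclosed I U Uopen Kcover.
have Kcompact : compact (K : set (pointwise E)).
  apply: (@subclosed_compact (pointwise E) _
    [set phi : pointwise E | forall x, `[- c x, c x]%classic (phi x)]).
  - move=> phi Kphi; apply: Kclosed => V HV Vphi.
    have [psi [Kpsi Vpsi]] := Kphi V (open_nbhs_nbhs (conj (wopen_open E V HV) Vphi)).
    by exists psi.
  - exact: (@tychonoff {classic E} (fun _ => R) (fun x => `[- c x, c x]%classic)
      (fun x => @segment_compact R (- c x) (c x))).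
  - move=> phi Kphi x; rewrite /= in_itv /=.
    have := Kbounded x phi Kphi; have := Rle_abs (phi x); have := Rle_abs (- phi x).
    by rewrite Rabs_Ropp => ? ? ?; apply/andP; split; apply/RleP; lra.
have Kcover_compact : cover_compact (K : set (pointwise E)) by rewrite -compact_cover.
have := Kcover_compact {classic I} setT U (fun i _ => wopen_open E _ (Uopen i)).
case=> [phi /Kcover [i Ui]|D _ Dcover]; first by exists i.
exists (D : seq {classic I}) => phi /Dcover [i Di Ui]; exists i; split => //.
elim: (enum_fset D) (Di : i \in enum_fset D) => [//|j s IH].
by rewrite in_cons => /orP [/eqP ->|/IH]; [left|right].
Qed.

Open Scope R_scope.

Theorem proposition4 (E : Frechet) (a b : R) (f : R -> E -> R) :
  a <= b ->
  wstar_continuous_on E a b f ->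
  wstar_compact (closed_convex_hull (image_interval f a b)).
Proof.
  intros Hab Hf.
  set (S := image_interval f a b).
  assert (HS : forall phi, S phi -> in_dual phi) by (intros phi [t [Ht ->]]; exact (proj1 Hf t Ht)).
  assert (HSpt : forall x, exists M, forall phi, S phi -> Rabs (phi x) <= M).
  { intro x. destruct (wstar_continuous_eval_bounded E a b f Hab Hf x) as [M HM].
    exists M. intros phi [t [Ht ->]]. exact (HM t Ht). }
  destruct (uniform_boundedness E S HS HSpt) as [n [d [C [Hd HSb]]]].
  assert (Hhull : forall phi, wadherent E (convex_hull S) phi ->
                    in_dual phi /\ ball_bounded E n d C phi).
  { intro phi. apply wadherent_convex_hull_equicontinuous; [exact Hd|].
    intros psi Spsi. exact (conj (proj1 (HS psi Spsi)) (HSb psi Spsi)). }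
  split; [intros phi [Hdual _]; exact Hdual|].
  apply pointwise_bounded_wclosed_compact.
  - intro x. destruct (ball_bounded_pointwise E n d C x Hd) as [M HM]. exists M.
    intros phi [Hdual Hphi]. exact (HM phi (proj1 Hdual) (proj2 (Hhull phi Hphi))).
  - intros phi Hphi. assert (Hw := wadherent_trans E _ _ phi (fun psi H => proj2 H) Hphi).
    exact (conj (proj1 (Hhull phi Hw)) Hw).
Qed.
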